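(* ${\bf K^\boxplus}$ is sound and strongly complete with respect to the class of serial bimodal frames (those in which both $R_1$ and $R_2$ are serial): for every $\Gamma\subseteq\mathcal{L}(\boxplus)$ and $\phi\in\mathcal{L}(\boxplus)$, $\Gamma\vdash_{{\bf K^\boxplus}}\phi$ iff $\phi$ is true at every state of every serial bimodal model at which all formulas of $\Gamma$ are true.
   Context: Fix a nonempty set $\mathbf{P}$ of propositional variables. A bimodal model is $\langle S,R_1,R_2,V\rangle$ with $S$ nonempty, $R_1,R_2\subseteq S\times S$, $V:\mathbf{P}\to\mathcal{P}(S)$. Write $R_i(s)=\{t\mid sR_it\}$. $\mathcal{L}(\boxplus):\ \phi::=p\mid\neg\phi\mid(\phi\wedge\phi)\mid\boxplus\phi$. Truth: $\mathcal{M},s\vDash\boxplus\phi$ iff ($\mathcal{M},t\vDash\phi$ for all $t\in R_1(s)$) or ($\mathcal{M},u\vDash\neg\phi$ for all $u\in R_2(s)$); atoms and Booleans as usual. ${\bf K^\boxplus}$ has axioms: all instances of propositional tautologies; CON: $\boxplus\phi\wedge\boxplus\psi\to\boxplus(\phi\wedge\psi)\wedge\boxplus(\phi\vee\psi)$; DIS: $\boxplus\phi\to\boxplus(\phi\vee\psi)\vee\boxplus(\phi\wedge\chi)$; and rules: modus ponens; RN: from $\phi$ infer $\boxplus\phi\wedge\boxplus\neg\phi$; RE: from $\phi\leftrightarrow\psi$ infer $\boxplus\phi\leftrightarrow\boxplus\psi$. *)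

From Stdlib Require Import List.
Import ListNotations.
Set Implicit Arguments.

Section Syntax.
Variable P : Type.

Inductive form : Type :=
| Var : P -> form
| Neg : form -> form
| And : form -> form -> form
| Box : form -> form.

Definition Or (a b : form) : form := Neg (And (Neg a) (Neg b)).
Definition Imp (a b : form) : form := Neg (And a (Neg b)).
Definition Iff (a b : form) : form := And (Imp a b) (Imp b a).

(* Propositional tautologies: true under every boolean assignment to the
   propositional atoms, where atoms are variables and boxed formulas. *)
Fixpoint teval (v : form -> bool) (f : form) : bool :=
  match f with
  | Var _ => v f
  | Neg a => negb (teval v a)
  | And a b => andb (teval v a) (teval v b)
  | Box _ => v f
  end.

Definition tautology (f : form) : Prop := forall v : form -> bool, teval v f = true.

Inductive Thm : form -> Prop :=
| Ax_taut : forall f, tautology f -> Thm f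
| Ax_CON : forall a b,
    Thm (Imp (And (Box a) (Box b)) (And (Box (And a b)) (Box (Or a b))))
| Ax_DIS : forall a b c,
    Thm (Imp (Box a) (Or (Box (Or a b)) (Box (And a c))))
| R_MP : forall a b, Thm (Imp a b) -> Thm a -> Thm b
| R_N : forall a, Thm a -> Thm (And (Box a) (Box (Neg a)))
| R_E : forall a b, Thm (Iff a b) -> Thm (Iff (Box a) (Box b)).

Definition deriv (Gamma : form -> Prop) (f : form) : Prop :=
  exists l : list form, (forall g, In g l -> Gamma g) /\ Thm (fold_right Imp f l).

End Syntax.

Arguments Var {P}.

Record model (P S : Type) : Type := Model {
  R1 : S -> S -> Prop;
  R2 : S -> S -> Prop;
  V : P -> S -> Prop
}.

Fixpoint sat (P S : Type) (M : model P S) (s : S) (f : form P) : Prop :=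
  match f with
  | Var p => V M p s
  | Neg a => ~ sat M s a
  | And a b => sat M s a /\ sat M s b
  | Box a => (forall t, R1 M s t -> sat M t a) \/
             (forall u, R2 M s u -> ~ sat M u a)
  end.

Definition serial (S : Type) (R : S -> S -> Prop) : Prop :=
  forall s, exists t, R s t.

Definition serial_consequence (P : Type) (Gamma : form P -> Prop) (f : form P) : Prop :=
  forall (S : Type) (M : model P S),
    serial (R1 M) -> serial (R2 M) ->
    forall s : S, (forall g, Gamma g -> sat M s g) -> sat M s f.

(* Completeness goes through a canonical model whose states are the maximal
   consistent sets.  Since the set of atoms is an arbitrary type, Lindenbaum's
   lemma is obtained from the Bourbaki-Witt fixpoint theorem: the least family
   of sets containing the given consistent set, closed under a one-formula
   extension step and under unions, is a chain, and its union is a consistent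
   fixpoint of the step, hence maximal.

   For a maximal consistent set G we read off what a box in G says about the
   successors: nec1 G a ("a holds at every R1-successor") holds when
   Box (a \/ psi) is in G for all psi, and nec2 G a ("a holds at every
   R2-successor") when Box (~a /\ chi) is in G for all chi.  Axioms CON, DIS
   and the rules RN, RE make both deductively closed filters, and every box in
   G is witnessed by one of them.  The canonical R_i sends G to the maximal
   consistent sets containing nec_i G, except when G contains every box, in
   which case G is its own unique successor; this keeps both relations serial.
   The truth lemma then reduces completeness to Lindenbaum's lemma. *)

From Stdlib Require Import List Bool Classical ClassicalEpsilon
  FunctionalExtensionality PropExtensionality.
Import ListNotations.
Set Implicit Arguments.
Unset Strict Implicit.

(* A fixed contradiction, available as soon as there is one atom. *)
Definition falsum {P} (p : P) : form P := And (Var p) (Neg (Var p)).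

Ltac boolean_cases :=
  unfold tautology; intros; unfold Imp, Or, Iff, falsum in *; simpl in *;
  repeat (match goal with
   | v : form _ -> bool |- _ =>
     match goal with
     | H : context [teval v ?y] |- _ => destruct (teval v y)
     | |- context [teval v ?y] => destruct (teval v y)
     | H : context [v ?y] |- _ => destruct (v y)
     | |- context [v ?y] => destruct (v y)
     end
   end; simpl in *); try discriminate; auto.

Section Propositional.
Variable P : Type.
Implicit Types (a b c f g : form P) (X Q : form P -> Prop) (l : list (form P)).

Definition extend X g : form P -> Prop := fun h => X h \/ h = g.

Lemma teval_Imp (v : form P -> bool) a b :
  teval v (Imp a b) = true <-> (teval v a = true -> teval v b = true).
Proof. unfold Imp; simpl; destruct (teval v a), (teval v b); simpl; intuition. Qed.

Lemma teval_fold_Imp (v : form P -> bool) f l :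
  teval v (fold_right (@Imp P) f l) = true <->
  ((forall g, In g l -> teval v g = true) -> teval v f = true).
Proof.
  induction l as [|h l IH]; cbn [fold_right In]; [firstorder|].
  rewrite teval_Imp, IH. split.
  - intros H Hall. apply H; auto.
  - intros H Hh Hl. apply H. intros g [<-|Hg]; auto.
Qed.

Lemma Thm_fold_MP l b :
  (forall h, In h l -> Thm h) -> Thm (fold_right (@Imp P) b l) -> Thm b.
Proof.
  induction l as [|h l IH]; simpl; auto.
  intros Hl T. apply IH; auto. apply (R_MP T), Hl; auto.
Qed.

Lemma Thm_taut1 a b :
  Thm a -> (forall v, teval v a = true -> teval v b = true) -> Thm b.
Proof.
  intros Ta H. apply (@Thm_fold_MP [a] b); [intros h [<-|[]]; exact Ta|].
  apply Ax_taut. intros v. apply teval_fold_Imp. intros Hall. apply H, Hall; simpl; auto.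
Qed.

Lemma Thm_taut2 a b c :
  Thm a -> Thm b ->
  (forall v, teval v a = true -> teval v b = true -> teval v c = true) -> Thm c.
Proof.
  intros Ta Tb H. apply (@Thm_fold_MP [a; b] c); [intros h [<-|[<-|[]]]; auto|].
  apply Ax_taut. intros v. apply teval_fold_Imp. intros Hall. apply H; apply Hall; simpl; auto.
Qed.

Lemma deriv_Thm X f : Thm f -> deriv X f.
Proof. intros T. exists []. split; [intros _ []|exact T]. Qed.

Lemma deriv_In X f : X f -> deriv X f.
Proof.
  intros Hf. exists [f]. split; [intros g [<-|[]]; exact Hf|].
  apply Ax_taut. intros v. apply teval_fold_Imp. intros Hall. apply Hall; simpl; auto.
Qed.

Lemma deriv_taut2 X a b c :
  deriv X a -> deriv X b ->
  (forall v, teval v a = true -> teval v b = true -> teval v c = true) -> deriv X c.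
Proof.
  intros [l1 [H1 T1]] [l2 [H2 T2]] H. exists (l1 ++ l2). split.
  - intros g Hg. apply in_app_or in Hg. destruct Hg; auto.
  - apply (Thm_taut2 T1 T2). intros v Ha Hb.
    rewrite teval_fold_Imp in Ha, Hb |- *. intros Hall.
    apply H; [apply Ha|apply Hb]; intros g Hg; apply Hall, in_or_app; auto.
Qed.

Lemma deriv_taut1 X a c :
  deriv X a -> (forall v, teval v a = true -> teval v c = true) -> deriv X c.
Proof. intros Ha H. apply (deriv_taut2 Ha Ha). auto. Qed.

Lemma split_premises X g l :
  (forall h, In h l -> extend X g h) ->
  exists l', (forall h, In h l' -> X h) /\ (forall h, In h l -> In h l' \/ h = g).
Proof.
  induction l as [|h l IH]; intros Hl.
  - exists []. split; intros _ [].
  - destruct IH as [l' [Hl' Hsplit]]; [intros; apply Hl; simpl; auto|].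
    destruct (Hl h (or_introl eq_refl)) as [Xh| ->].
    + exists (h :: l'). split; [intros k [<-|Hk]; auto|].
      intros k [<-|Hk]; [left; left; reflexivity|].
      destruct (Hsplit k Hk); [left; right|right]; auto.
    + exists l'. split; auto. intros k [<-|Hk]; auto.
Qed.

Theorem deduction X g f : deriv (extend X g) f -> deriv X (Imp g f).
Proof.
  intros [l [Hl T]]. destruct (split_premises Hl) as [l' [Hl' Hsplit]].
  exists l'. split; auto. apply (Thm_taut1 T). intros v Hv.
  rewrite teval_fold_Imp in Hv |- *. rewrite teval_Imp. intros Hall Hg.
  apply Hv. intros k Hk. destruct (Hsplit k Hk) as [H| ->]; auto.
Qed.

Record deductive_filter Q : Prop := {
  filter_Thm : forall a, Thm a -> Q a;
  filter_up : forall a b, Q a -> Thm (Imp a b) -> Q b;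
  filter_And : forall a b, Q a -> Q b -> Q (And a b)
}.

Lemma filter_deriv Q f : deductive_filter Q -> deriv Q f -> Q f.
Proof.
  intros HQ [l [Hl T]]. induction l as [|g l IH] in f, Hl, T |- *.
  - exact (filter_Thm HQ T).
  - assert (Tg : Thm (fold_right (@Imp P) (Imp g f) l)).
    { apply (Thm_taut1 T). intros v H. cbn [fold_right] in H.
      rewrite teval_fold_Imp, teval_Imp. rewrite teval_Imp, teval_fold_Imp in H.
      intros Hall Hg. exact (H Hg Hall). }
    assert (Qg : Q g) by (apply Hl; left; reflexivity).
    assert (Qgf : Q (Imp g f)) by (apply IH; auto; intros h Hh; apply Hl; right; exact Hh).
    apply (filter_up HQ (filter_And HQ Qg Qgf)). apply Ax_taut. boolean_cases.
Qed.

End Propositional.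

Section Soundness.
Variables (P S : Type) (M : model P S).

Definition sat_valuation (s : S) (g : form P) : bool :=
  if excluded_middle_informative (sat M s g) then true else false.

Lemma sat_valuation_teval s f : teval (sat_valuation s) f = true <-> sat M s f.
Proof.
  induction f as [p|a IH|a IHa b IHb|a IH]; simpl.
  - unfold sat_valuation; destruct excluded_middle_informative; split; easy.
  - rewrite negb_true_iff, <- IH. destruct (teval _ a); split; easy.
  - rewrite andb_true_iff, IHa, IHb. tauto.
  - unfold sat_valuation; destruct excluded_middle_informative; split; easy.
Qed.

Lemma sat_Imp s a b : sat M s (Imp a b) <-> (sat M s a -> sat M s b).
Proof. simpl. split; [intros H Ha; apply NNPP; auto | intros H [Ha Hb]; auto]. Qed.

Lemma sat_Or s a b : sat M s (Or a b) <-> (sat M s a \/ sat M s b).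
Proof. simpl. split; [intros H; apply NNPP; intros Hn; apply H; split; auto | tauto]. Qed.

Lemma sat_Iff s a b : sat M s (Iff a b) <-> (sat M s a <-> sat M s b).
Proof. unfold Iff. cbn [sat]. rewrite !sat_Imp. tauto. Qed.

Lemma Thm_valid f : Thm f -> forall s, sat M s f.
Proof.
  induction 1 as [f Hf|a b|a b c|a b _ IHab _ IHa|a _ IHa|a b _ IHab]; intros s.
  - apply sat_valuation_teval, Hf.
  - apply sat_Imp. cbn [sat]. setoid_rewrite sat_Or. firstorder.
  - apply sat_Imp. rewrite sat_Or. cbn [sat]. setoid_rewrite sat_Or. firstorder.
  - exact (proj1 (sat_Imp s a b) (IHab s) (IHa s)).
  - simpl. split; [left|right]; auto.
  - assert (E : forall t, sat M t a <-> sat M t b) by (intros t; apply sat_Iff, IHab).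
    apply sat_Iff. simpl. split; intros [H|H]; firstorder.
Qed.

End Soundness.

(* Soundness, even without the seriality assumptions. *)
Theorem soundness P (Gamma : form P -> Prop) f :
  deriv Gamma f -> serial_consequence Gamma f.
Proof.
  intros [l [Hl T]] S M _ _ s HG. pose proof (Thm_valid M T s) as H. clear T.
  induction l as [|h l IH]; cbn [fold_right] in H; auto.
  apply IH; [intros; apply Hl; right; auto|].
  apply (proj1 (sat_Imp M s _ _) H), HG, Hl. left; reflexivity.
Qed.

Definition sub {A} (X Y : A -> Prop) : Prop := forall x, X x -> Y x.

Definition sup {A} (X0 : A -> Prop) (Fam : (A -> Prop) -> Prop) : A -> Prop :=
  fun x => X0 x \/ exists X, Fam X /\ X x.

Lemma set_ext {A} (X Y : A -> Prop) : sub X Y -> sub Y X -> X = Y.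
Proof.
  intros H1 H2. apply functional_extensionality. intros x.
  apply propositional_extensionality. split; auto.
Qed.

Section Tower.
Variables (A : Type) (X0 : A -> Prop) (f : (A -> Prop) -> A -> Prop).
Hypothesis f_inflationary : forall X, sub X (f X).

Inductive tower : (A -> Prop) -> Prop :=
| tower_base : tower X0
| tower_step : forall X, tower X -> tower (f X)
| tower_sup : forall Fam, (forall X, Fam X -> tower X) -> tower (sup X0 Fam).

Lemma tower_above_base X : tower X -> sub X0 X.
Proof.
  induction 1 as [| X _ IH | Fam _ IH]; intros x Hx; auto.
  - apply f_inflationary, IH, Hx.
  - left; exact Hx.
Qed.

Definition extreme (c : A -> Prop) : Prop :=
  forall X, tower X -> sub X c -> X = c \/ sub (f X) c.

Lemma extreme_comparable c :
  tower c -> extreme c -> forall X, tower X -> sub X c \/ sub (f c) X.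
Proof.
  intros Tc Ec. induction 1 as [| X TX IH | Fam HF IH].
  - left. apply tower_above_base, Tc.
  - destruct IH as [H|H].
    + destruct (Ec X TX H) as [->|H2]; [right; intros x Hx; exact Hx|left; exact H2].
    + right. intros x Hx. apply f_inflationary, H, Hx.
  - destruct (classic (exists Y, Fam Y /\ sub (f c) Y)) as [[Y [FY HY]]|Hn].
    + right. intros x Hx. right. exists Y. auto.
    + left. intros x [Hx|[Y [FY HY]]]; [apply (tower_above_base Tc), Hx|].
      destruct (IH Y FY) as [H|H]; [apply H, HY|].
      exfalso; apply Hn; eauto.
Qed.

Lemma tower_extreme c : tower c -> extreme c.
Proof.
  induction 1 as [| c Tc IH | Fam HF IH]; intros X TX HX.
  - left. apply set_ext; [exact HX|apply tower_above_base, TX].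
  - destruct (extreme_comparable Tc IH TX) as [H|H].
    + destruct (IH X TX H) as [->|H2]; right; intros x Hx; [exact Hx|].
      apply f_inflationary, H2, Hx.
    + left. apply set_ext; auto.
  - destruct (classic (exists Y, Fam Y /\ ~ sub Y X)) as [[Y [FY HY]]|Hn].
    + destruct (extreme_comparable (HF Y FY) (IH Y FY) TX) as [H|H].
      * destruct (IH Y FY X TX H) as [E|H2].
        -- exfalso. apply HY. rewrite E. intros x Hx; exact Hx.
        -- right. intros x Hx. right. exists Y; auto.
      * exfalso. apply HY. intros x Hx. apply H, f_inflationary, Hx.
    + left. apply set_ext; [exact HX|]. intros x [Hx|[Y [FY HY]]].
      * apply (tower_above_base TX), Hx.
      * apply NNPP. intros Hxa. apply Hn. exists Y. split; auto.
Qed.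

Lemma tower_chain X Y : tower X -> tower Y -> sub X Y \/ sub Y X.
Proof.
  intros TX TY. destruct (extreme_comparable TY (tower_extreme TY) TX) as [H|H]; auto.
  right. intros x Hx. apply H, f_inflationary, Hx.
Qed.

(* A finite subset of a union of tower members lies in X0 or in one member;
   this is what makes consistency survive unions. *)
Lemma tower_directed Fam (l : list A) :
  (forall X, Fam X -> tower X) -> (forall x, In x l -> sup X0 Fam x) ->
  (forall x, In x l -> X0 x) \/ exists Y, Fam Y /\ forall x, In x l -> Y x.
Proof.
  intros HF. induction l as [|x l IH]; intros Hl; [left; intros _ []|].
  destruct IH as [H|[Y [FY HY]]]; [intros; apply Hl; right; auto|..];
  destruct (Hl x (or_introl eq_refl)) as [Hx|[Z [FZ HZ]]].
  - left. intros y [<-|Hy]; auto.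
  - right. exists Z. split; auto.
    intros y [<-|Hy]; auto. apply (tower_above_base (HF Z FZ)); auto.
  - right. exists Y. split; auto.
    intros y [<-|Hy]; auto. apply (tower_above_base (HF Y FY)); auto.
  - destruct (tower_chain (HF Y FY) (HF Z FZ)) as [H|H].
    + right. exists Z. split; auto. intros y [<-|Hy]; auto.
    + right. exists Y. split; auto. intros y [<-|Hy]; auto.
Qed.

Lemma tower_top : exists T, tower T /\ sub (f T) T.
Proof.
  exists (sup X0 tower). assert (TT : tower (sup X0 tower)) by (apply tower_sup; auto).
  split; [exact TT|]. intros x Hx. right. exists (f (sup X0 tower)).
  split; [apply tower_step, TT|exact Hx].
Qed.

End Tower.

Section Canonical.
Variables (P : Type) (p0 : P).
Implicit Types (a b c f g : form P) (X G Q : form P -> Prop).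

Definition consistent X : Prop := ~ deriv X (falsum p0).

Definition maximal_consistent X : Prop :=
  consistent X /\ forall g, X g \/ ~ consistent (extend X g).

Definition extend_step X : form P -> Prop :=
  match excluded_middle_informative (exists g, ~ X g /\ consistent (extend X g)) with
  | left H => extend X (proj1_sig (constructive_indefinite_description _ H))
  | right _ => X
  end.

Lemma extend_step_inflationary X : sub X (extend_step X).
Proof. unfold extend_step; destruct excluded_middle_informative; intros a Ha; [left|]; auto. Qed.

Lemma extend_step_consistent X : consistent X -> consistent (extend_step X).
Proof.
  unfold extend_step; destruct excluded_middle_informative as [H|H]; auto.
  intros _; exact (proj2 (proj2_sig (constructive_indefinite_description _ H))).
Qed.

Lemma extend_step_fixpoint X :
  sub (extend_step X) X -> forall g, X g \/ ~ consistent (extend X g).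
Proof.
  unfold extend_step; destruct excluded_middle_informative as [H|H]; intros Hs g.
  - exfalso. apply (proj1 (proj2_sig (constructive_indefinite_description _ H))).
    apply Hs. right; reflexivity.
  - destruct (classic (X g)); auto. right. intros Hc. apply H. eauto.
Qed.

Theorem lindenbaum X0 : consistent X0 -> exists M, maximal_consistent M /\ sub X0 M.
Proof.
  intros H0.
  assert (Hcons : forall X, tower X0 extend_step X -> consistent X).
  { induction 1 as [|X _ IH|Fam HF IH].
    - exact H0.
    - apply extend_step_consistent, IH.
    - intros [l [Hl T]].
      destruct (tower_directed extend_step_inflationary HF Hl) as [H|[Y [FY HY]]].
      + apply H0. exists l; auto.
      + apply (IH Y FY). exists l; auto. }
  destruct (tower_top X0 extend_step) as [M [TM HM]].
  exists M. split; [split|].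
  - apply Hcons, TM.
  - apply extend_step_fixpoint, HM.
  - apply (tower_above_base extend_step_inflationary TM).
Qed.

Section MaximalConsistent.
Variable X : form P -> Prop.
Hypothesis X_mcs : maximal_consistent X.

Lemma mcs_deriv f : deriv X f -> X f.
Proof.
  intros Hd. destruct X_mcs as [Hc Hmax]. destruct (Hmax f) as [H|H]; auto.
  exfalso. apply NNPP in H. apply deduction in H.
  apply Hc. apply (deriv_taut2 Hd H). boolean_cases.
Qed.

Lemma mcs_Thm f : Thm f -> X f.
Proof. intros T. apply mcs_deriv, deriv_Thm, T. Qed.

Lemma mcs_Neg f : X (Neg f) <-> ~ X f.
Proof.
  destruct X_mcs as [Hc Hmax]. split.
  - intros Hn Hf. apply Hc. apply (deriv_taut2 (deriv_In Hn) (deriv_In Hf)). boolean_cases.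
  - intros Hf. destruct (Hmax (Neg f)) as [H|H]; auto. exfalso.
    destruct (Hmax f) as [H'|H']; [auto|].
    apply NNPP, deduction in H. apply NNPP, deduction in H'.
    apply Hc. apply (deriv_taut2 H H'). boolean_cases.
Qed.

Lemma mcs_And a b : X (And a b) <-> X a /\ X b.
Proof.
  split.
  - intros H. split; apply mcs_deriv; apply (deriv_taut1 (deriv_In H)); boolean_cases.
  - intros [Ha Hb]. apply mcs_deriv. apply (deriv_taut2 (deriv_In Ha) (deriv_In Hb)).
    boolean_cases.
Qed.

Lemma mcs_MP a b : X (Imp a b) -> X a -> X b.
Proof.
  intros Hab Ha. apply mcs_deriv. apply (deriv_taut2 (deriv_In Hab) (deriv_In Ha)).
  boolean_cases.
Qed.

Lemma mcs_Or a b : X (Or a b) -> X a \/ X b.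
Proof.
  unfold Or. rewrite mcs_Neg, mcs_And, !mcs_Neg. tauto.
Qed.

End MaximalConsistent.

(* Sets containing every boxed formula: these get a reflexive point in the
   canonical model. *)
Definition all_boxes G : Prop := forall a, G (Box a).

(* a holds at every R1-successor. *)
Definition nec1 G a : Prop := forall psi, G (Box (Or a psi)).

(* a holds at every R2-successor. *)
Definition nec2 G a : Prop := forall chi, G (Box (And (Neg a) chi)).

Section Boxes.
Variable G : form P -> Prop.
Hypothesis G_mcs : maximal_consistent G.

Lemma box_congr a b : Thm (Iff a b) -> G (Box a) -> G (Box b).
Proof.
  intros T Ha. apply R_E, (mcs_Thm G_mcs) in T.
  apply (mcs_And G_mcs) in T. exact (mcs_MP G_mcs (proj1 T) Ha).
Qed.

Lemma box_Thm a : Thm a -> G (Box a) /\ G (Box (Neg a)).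
Proof. intros T. apply (mcs_And G_mcs), (mcs_Thm G_mcs), R_N, T. Qed.

Lemma box_CON a b :
  G (Box a) -> G (Box b) -> G (Box (And a b)) /\ G (Box (Or a b)).
Proof.
  intros Ha Hb. apply (mcs_And G_mcs). apply (mcs_MP G_mcs (mcs_Thm G_mcs (Ax_CON a b))).
  apply (mcs_And G_mcs); auto.
Qed.

Lemma box_DIS a b c : G (Box a) -> G (Box (Or a b)) \/ G (Box (And a c)).
Proof.
  intros Ha. apply (mcs_Or G_mcs). exact (mcs_MP G_mcs (mcs_Thm G_mcs (Ax_DIS a b c)) Ha).
Qed.

Lemma nec1_filter : deductive_filter (nec1 G).
Proof.
  split.
  - intros a T psi. assert (T' : Thm (Or a psi)) by (apply (Thm_taut1 T); boolean_cases).
    exact (proj1 (box_Thm T')).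
  - intros a b Ha T psi. apply (box_congr (a := Or a (Or b psi))); [|apply Ha].
    apply (Thm_taut1 T). boolean_cases.
  - intros a b Ha Hb psi. destruct (box_CON (Ha psi) (Hb psi)) as [H _].
    refine (box_congr _ H). apply Ax_taut. boolean_cases.
Qed.

Lemma nec2_filter : deductive_filter (nec2 G).
Proof.
  split.
  - intros a T chi. assert (T' : Thm (Neg (And (Neg a) chi))).
    { apply (Thm_taut1 T). boolean_cases. }
    apply (box_congr (a := Neg (Neg (And (Neg a) chi)))); [|exact (proj2 (box_Thm T'))].
    apply Ax_taut. boolean_cases.
  - intros a b Ha T chi. apply (box_congr (a := And (Neg a) (And (Neg b) chi))); [|apply Ha].
    apply (Thm_taut1 T). boolean_cases.
  - intros a b Ha Hb chi. destruct (box_CON (Ha chi) (Hb chi)) as [_ H].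
    refine (box_congr _ H). apply Ax_taut. boolean_cases.
Qed.

(* Each box is witnessed on one side (axiom DIS). *)
Lemma box_nec_split a : G (Box a) -> nec1 G a \/ nec2 G (Neg a).
Proof.
  intros Ha. destruct (classic (nec1 G a)) as [H|H]; [left; exact H|right].
  apply not_all_ex_not in H. destruct H as [psi Hpsi]. intros chi.
  destruct (box_DIS psi chi Ha) as [H|H]; [contradiction|].
  refine (box_congr _ H). apply Ax_taut. boolean_cases.
Qed.

Lemma nec1_box a : nec1 G a -> G (Box a).
Proof. intros H. refine (box_congr _ (H a)). apply Ax_taut. boolean_cases. Qed.

Lemma nec2_box a : nec2 G (Neg a) -> G (Box a).
Proof. intros H. refine (box_congr _ (H a)). apply Ax_taut. boolean_cases. Qed.

Lemma nec1_falsum : nec1 G (falsum p0) -> all_boxes G.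
Proof. intros H psi. refine (box_congr _ (H psi)). apply Ax_taut. boolean_cases. Qed.

Lemma nec2_falsum : nec2 G (falsum p0) -> all_boxes G.
Proof. intros H psi. refine (box_congr _ (H psi)). apply Ax_taut. boolean_cases. Qed.

End Boxes.

Lemma filter_consistent Q : deductive_filter Q -> ~ Q (falsum p0) -> consistent Q.
Proof. intros HQ Hbot Hd. exact (Hbot (filter_deriv HQ Hd)). Qed.

Lemma filter_witness Q a :
  deductive_filter Q -> ~ Q (Neg a) ->
  exists T, maximal_consistent T /\ sub Q T /\ T a.
Proof.
  intros HQ Hna.
  assert (Hc : consistent (extend Q a)).
  { intros Hd. apply Hna, (filter_deriv HQ). apply (deriv_taut1 (deduction Hd)).
    boolean_cases. }
  destruct (lindenbaum Hc) as [T [HT Hsub]].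
  exists T. split; [exact HT|split].
  - intros g Hg. apply Hsub. left; exact Hg.
  - apply Hsub. right; reflexivity.
Qed.

Definition state : Type := {X : form P -> Prop | maximal_consistent X}.

Definition canon_rel (nec : (form P -> Prop) -> form P -> Prop) (s t : state) : Prop :=
  (all_boxes (proj1_sig s) /\ t = s) \/
  (~ all_boxes (proj1_sig s) /\ sub (nec (proj1_sig s)) (proj1_sig t)).

Definition canonical_model : model P state :=
  Model (canon_rel nec1) (canon_rel nec2) (fun p s => proj1_sig s (Var p)).

Lemma canon_rel_serial (nec : (form P -> Prop) -> form P -> Prop) :
  (forall G, maximal_consistent G -> deductive_filter (nec G)) ->
  (forall G, maximal_consistent G -> nec G (falsum p0) -> all_boxes G) ->
  serial (canon_rel nec).
Proof.
  intros Hfilter Hbot [G HG]. destruct (classic (all_boxes G)) as [Hab|Hab].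
  - exists (exist _ G HG). left. split; [exact Hab|reflexivity].
  - assert (Hc : consistent (nec G)).
    { apply (filter_consistent (Hfilter G HG)). intros H. apply Hab, (Hbot G HG H). }
    destruct (lindenbaum Hc) as [T [HT Hsub]].
    exists (exist _ T HT). right. split; assumption.
Qed.

Lemma truth_Box a :
  (forall t : state, sat canonical_model t a <-> proj1_sig t a) ->
  forall s : state, sat canonical_model s (Box a) <-> proj1_sig s (Box a).
Proof.
  intros IH [G HG]. cbn [sat canonical_model R1 R2 proj1_sig]. unfold canon_rel; simpl.
  destruct (classic (all_boxes G)) as [Hab|Hab].
  - split; intros H; [apply Hab|].
    destruct (classic (G a)) as [Ha|Ha]; [left|right];
      intros t [[_ ->]|[Hn _]]; try contradiction; rewrite IH; exact Ha.
  - split.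
    + intros [H1|H2]; apply NNPP; intros Hn.
      * destruct (filter_witness (a := Neg a) (nec1_filter HG)) as [T [HT [Hsub Ta]]].
        { intros Hnn. apply Hn, (nec1_box HG), (filter_up (nec1_filter HG) Hnn).
          apply Ax_taut. boolean_cases. }
        apply (mcs_Neg HT) in Ta. apply Ta, (IH (exist _ T HT)), H1.
        right. split; assumption.
      * destruct (filter_witness (a := a) (nec2_filter HG)) as [T [HT [Hsub Ta]]].
        { intros Hna. apply Hn, (nec2_box HG Hna). }
        apply (H2 (exist _ T HT)); [right; split; assumption|].
        apply (IH (exist _ T HT)), Ta.
    + intros HB. destruct (box_nec_split HG HB) as [H|H]; [left|right];
        intros [T HT] [[Hn _]|[_ Hsub]]; try contradiction; rewrite IH; simpl.
      * apply Hsub, H.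
      * apply (mcs_Neg HT), Hsub, H.
Qed.

Theorem truth_lemma f : forall s : state, sat canonical_model s f <-> proj1_sig s f.
Proof.
  induction f as [p|a IH|a IHa b IHb|a IH]; intros s.
  - reflexivity.
  - simpl. rewrite IH. symmetry. apply mcs_Neg, (proj2_sig s).
  - simpl. rewrite IHa, IHb. symmetry. apply mcs_And, (proj2_sig s).
  - apply truth_Box, IH.
Qed.

Theorem completeness (Gamma : form P -> Prop) phi :
  serial_consequence Gamma phi -> deriv Gamma phi.
Proof.
  intros Hcons. apply NNPP. intros Hn.
  assert (Hc : consistent (extend Gamma (Neg phi))).
  { intros Hd. apply Hn, (deriv_taut1 (deduction Hd)). boolean_cases. }
  destruct (lindenbaum Hc) as [T [HT Hsub]].
  assert (Hphi : T phi).
  { apply (truth_lemma phi (exist _ T HT)), Hcons.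
    - apply canon_rel_serial; [exact nec1_filter|exact nec1_falsum].
    - apply canon_rel_serial; [exact nec2_filter|exact nec2_falsum].
    - intros g Hg. apply (truth_lemma g (exist _ T HT)), Hsub. left; exact Hg. }
  exact (proj1 (mcs_Neg HT phi) (Hsub _ (or_intror eq_refl)) Hphi).
Qed.

End Canonical.

Theorem theorem6 (P : Type) (HP : inhabited P)
  (Gamma : form P -> Prop) (phi : form P) :
  deriv Gamma phi <-> serial_consequence Gamma phi.
Proof.
  destruct HP as [p0]. split.
  - apply soundness.
  - apply (completeness p0).
Qed.
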